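(* Let $r\in\{0,1\}$, $n\ge1$ and $\lambda\in\mathcal P_r(n)$. Then \[ I_\lambda=\sum_{D}\mathrm{sign}(D), \] where the sum is over all standard domino tableaux $D$ of shape $\lambda$.
   Context: Partitions are identified with Young diagrams in English notation. A domino is a set of two cells sharing an edge. $\delta_0=\emptyset$, $\delta_1=(1)$; $\mathcal P_r(n)$ is the set of partitions with 2-core $\delta_r$ (the 2-core is obtained by repeatedly removing dominoes while staying a partition) and size $|\delta_r|+2n$. A standard domino tableau of shape $\lambda\in\mathcal P_r(n)$ is a chain $\delta_r=\lambda^0\subset\cdots\subset\lambda^n=\lambda$ with each $\lambda^k/\lambda^{k-1}$ a domino (the domino with value $k$). For a standard Young tableau $T$ its reading word reads the rows from top to bottom, each from left to right, and $\mathrm{sign}(T)$ is the sign of this permutation; $I_\lambda=\sum_T\mathrm{sign}(T)$ over all standard Young tableaux of shape $\lambda$. For a standard domino tableau $D$, $T(D)$ is the standard Young tableau obtained (for $r=0$) by filling the domino with value $k$ with $2k-1,2k$, or (for $r=1$) by putting $1$ in the core cell and filling the domino with value $k$ with $2k,2k+1$, the smaller number in the left (horizontal domino) or upper (vertical domino) cell; $\mathrm{sign}(D)=\mathrm{sign}(T(D))$. *)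

From mathcomp Require Import all_boot all_order all_algebra all_fingroup.
Unset Printing Implicit Defensive.
Import GRing.Theory.
Local Open Scope ring_scope.

(* Partitions are weakly decreasing sequences of positive naturals
   (row lengths, English notation: row i has cells (i,0),...,(i,lam_i - 1)). *)
Definition is_partition (lam : seq nat) : bool :=
  sorted geq lam && all (fun x => 0 < x)%N lam.

Definition delta (r : nat) : seq nat := if r == 0%N then [::] else [:: 1%N].

(* Cells of a box large enough to contain every diagram of size <= N. *)
Definition cell (N : nat) := ('I_N.+1 * 'I_N.+1)%type.

Definition diag (N : nat) (lam : seq nat) : {set cell N} :=
  [set c : cell N | (c.2 < nth 0 lam c.1)%N].

Definition young (N : nat) (A : {set cell N}) : bool :=
  [forall c in A, forall d : cell N,
     ((d.1 <= c.1)%N && (d.2 <= c.2)%N) ==> (d \in A)].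

Definition adjacent (N : nat) (c d : cell N) : bool :=
  ((c.1 == d.1 :> nat) && ((c.2.+1 == d.2 :> nat) || (d.2.+1 == c.2 :> nat)))
  || ((c.2 == d.2 :> nat) && ((c.1.+1 == d.1 :> nat) || (d.1.+1 == c.1 :> nat))).

Definition is_domino (N : nat) (A : {set cell N}) : bool :=
  [exists c : cell N, exists d : cell N, adjacent N c d && (A == [set c; d])].

(* A standard domino tableau of shape lam with m dominoes and core delta_r:
   a chain delta_r = D 0 subset ... subset D m = lam of Young diagrams,
   each D k / D (k-1) a domino (the domino with value k). *)
Definition is_domino_tab (r m : nat) (lam : seq nat)
    (D : {ffun 'I_m.+1 -> {set cell (sumn lam)}}) : bool :=
  [forall k, young _ (D k)]
  && (D ord0 == diag (sumn lam) (delta r))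
  && (D ord_max == diag (sumn lam) lam)
  && [forall k : 'I_m, (D (inord k) \subset D (inord k.+1))
                       && is_domino _ (D (inord k.+1) :\: D (inord k))].

(* The set P_r(n): 2-core delta_r and size |delta_r| + 2n.  "lam has 2-core
   delta_r" is expressed as: lam is reached from delta_r by successively adding
   dominoes (delta_r admits no removable domino). *)
Definition in_Pr (r n : nat) (lam : seq nat) : Prop :=
  is_partition lam
  /\ (exists m (D : {ffun 'I_m.+1 -> {set cell (sumn lam)}}), is_domino_tab r m lam D)
  /\ sumn lam = (sumn (delta r) + 2 * n)%N.

(* The word (s(0)+1, ..., s(N-1)+1) of a permutation of 'I_N, i.e. a
   permutation of {1,...,N} in one-line notation. *)
Definition pword (N : nat) (s : 'S_N) : seq nat := [seq (s i).+1 | i <- enum 'I_N].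

(* sign of a word that is a permutation of {1..N} (0 otherwise, never used) *)
Definition sign_word (N : nat) (w : seq nat) : int :=
  if [pick s : 'S_N | pword N s == w] is Some s then (-1) ^+ odd_perm s else 0.

Definition is_standard (lam : seq nat) (t : seq (seq nat)) : bool :=
  all (fun i => sorted ltn (nth [::] t i)) (iota 0 (size lam))
  && all (fun i => all (fun j => (nth 0 (nth [::] t i) j < nth 0 (nth [::] t i.+1) j)%N)
                       (iota 0 (nth 0 lam i.+1)))
         (iota 0 (size lam)).

(* A standard Young tableau of shape lam is determined by its reading word,
   a permutation of {1,..,|lam|}; the tableau is the word cut into rows of
   lengths lam.  I_lam = sum over SYT T of sign(T). *)
Definition I_lam (lam : seq nat) : int :=
  \sum_(s : 'S_(sumn lam) | is_standard lam (reshape lam (pword _ s))) (-1) ^+ odd_perm s.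

Definition dom_entry (r m : nat) (lam : seq nat)
    (D : {ffun 'I_m.+1 -> {set cell (sumn lam)}}) (c : cell (sumn lam)) : nat :=
  if (r == 1%N) && (c == (ord0, ord0)) then 1%N else
  match [pick k : 'I_m | c \in D (inord k.+1) :\: D (inord k)] with
  | Some k =>
      let second :=
        match [pick d in D (inord k.+1) :\: D (inord k) | d != c] with
        | Some d => (d.1 + d.2 < c.1 + c.2)%N   (* c is the right/lower cell *)
        | None => false
        end in
      (2 * k.+1 - 1 + r + second)%N
  | None => 0%N
  end.

Definition tab_of_dom (r m : nat) (lam : seq nat)
    (D : {ffun 'I_m.+1 -> {set cell (sumn lam)}}) : seq (seq nat) :=
  [seq [seq dom_entry r m lam D (inord i, inord j) | j <- iota 0 (nth 0 lam i)]
     | i <- iota 0 (size lam)].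

Definition sign_dom (r m : nat) (lam : seq nat)
    (D : {ffun 'I_m.+1 -> {set cell (sumn lam)}}) : int :=
  sign_word (sumn lam) (flatten (tab_of_dom r m lam D)).

From mathcomp Require Import all_boot all_order all_algebra all_fingroup.
From mathcomp Require Import zify.
Set Implicit Arguments. Unset Strict Implicit.
Import GRing.Theory Num.Theory.

(* Encode a filling of [lam] by its reading word, a permutation [s].  Call a
   standard Young tableau domino-like when, for every [k < n], its entries
   [r + 2k + 1] and [r + 2k + 2] lie in adjacent cells.  The domino-like
   tableaux are exactly the tableaux [T(D)]: from such a tableau, the cells with
   entries at most [r + 2k] form the chain of diagrams of a domino tableau [D],
   and [T(D)] gives back the tableau because in a standard tableau the smaller
   of two adjacent entries is the left or upper one.  On the other standard
   tableaux, exchanging the entries [r + 2k + 1] and [r + 2k + 2] for the first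
   non-adjacent pair keeps the tableau standard and multiplies the reading word
   by a transposition, so it is a sign-reversing involution and these tableaux
   contribute nothing to [I_lam]. *)

Definition adjacent_at (i j i' j' : nat) :=
  ((i == i') && ((j.+1 == j') || (j'.+1 == j))) ||
  ((j == j') && ((i.+1 == i') || (i'.+1 == i))).

Lemma adjacent_atC i j i' j' : adjacent_at i j i' j' = adjacent_at i' j' i j.
Proof. by rewrite /adjacent_at; apply/idP/idP; lia. Qed.

Lemma adjacent_at_irr i j : adjacent_at i j i j = false.
Proof. by rewrite /adjacent_at; apply/negbTE; lia. Qed.

Section Cells.
Variable N : nat.

Lemma adjacentE (c d : cell N) : adjacent N c d = adjacent_at c.1 c.2 d.1 d.2.
Proof. by []. Qed.

Lemma adjacent_diagonal_neq (c d : cell N) : adjacent N c d -> c.1 + c.2 != d.1 + d.2 :> nat.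
Proof. by rewrite adjacentE /adjacent_at; lia. Qed.

Lemma cell_eq_inord (c : cell N) i j : i <= N -> j <= N ->
  (c == (inord i, inord j)) = ((c.1 == i :> nat) && (c.2 == j :> nat)).
Proof. by move=> le_i le_j; case: c => a b; rewrite xpair_eqE -!val_eqE /= !inordK. Qed.

End Cells.

Definition pair_swap_val r k v :=
  if v == r + 2 * k + 1 then r + 2 * k + 2
  else if v == r + 2 * k + 2 then r + 2 * k + 1 else v.

Lemma pair_swap_val_ltn r k u v : u < v -> ~ (u = r + 2 * k + 1 /\ v = r + 2 * k + 2) ->
  pair_swap_val r k u < pair_swap_val r k v.
Proof.
rewrite /pair_swap_val => lt_uv nbad.
by case: eqP => ?; case: eqP => ?; try case: eqP => ?; try case: eqP => ?; lia.
Qed.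

Section Partition.
Variable lam : seq nat.
Hypothesis lam_partition : is_partition lam.
Local Notation N := (sumn lam).

Lemma nth_lam_decr i i' : i <= i' -> nth 0 lam i' <= nth 0 lam i.
Proof.
move=> le_ii'; case: (ltnP i' (size lam)) => [lt_i'|]; last by move/(nth_default 0)->.
have [sorted_lam _] := andP lam_partition.
have geq_trans : transitive geq by move=> a b c /=; lia.
have geq_refl : reflexive geq := leqnn.
by apply: (sorted_leq_nth geq_trans geq_refl 0 sorted_lam); rewrite ?inE //; lia.
Qed.

Lemma nth_lam_gt0 i : i < size lam -> 0 < nth 0 lam i.
Proof. by move=> lt_i; have [_ /allP] := andP lam_partition; apply; rewrite mem_nth. Qed.

Lemma nth_lam_le_sumn i : nth 0 lam i <= N.
Proof. by elim: lam i => [|a l IH] [|i] //=; [apply: leq_addr | apply: leq_trans (IH i) (leq_addl _ _)]. Qed.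

Lemma size_le_sumn : size lam <= N.
Proof.
have [_] := andP lam_partition.
by elim: lam => [|a l IH] //= /andP[a_gt0 /IH]; rewrite -add1n; apply: leq_add.
Qed.

Definition in_shape i j := j < nth 0 lam i.

Lemma in_shape_size i j : in_shape i j -> i < size lam.
Proof. by rewrite /in_shape ltnNge; apply: contraNltn => /(nth_default 0)->. Qed.

Lemma in_shape_down i j i' j' : in_shape i' j' -> i <= i' -> j <= j' -> in_shape i j.
Proof. by rewrite /in_shape => h /nth_lam_decr le_ii' le_jj'; lia. Qed.

Lemma in_shape_lt i j : in_shape i j -> i < N /\ j < N.
Proof.
move=> h; have := in_shape_size h; have := nth_lam_le_sumn i; have := size_le_sumn.
by rewrite /in_shape in h; lia.
Qed.

Lemma in_diag (c : cell N) : (c \in diag N lam) = in_shape c.1 c.2.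
Proof. by rewrite inE. Qed.

Lemma in_diag_inord i j : i <= N -> j <= N ->
  ((inord i, inord j) \in diag N lam) = in_shape i j.
Proof. by move=> le_i le_j; rewrite in_diag /= !inordK. Qed.

Section ReadingWord.
Hypothesis lam_gt0 : 0 < N.

Definition ord_of (v : nat) : 'I_N := insubd (Ordinal lam_gt0) v.

Lemma ord_ofK v : v < N -> ord_of v = v :> nat.
Proof. by move=> lt_v; rewrite val_insubd lt_v. Qed.

Lemma size_pword (s : 'S_N) : size (pword N s) = N.
Proof. by rewrite size_map size_enum_ord. Qed.

Lemma nth_pword (s : 'S_N) p : p < N -> nth 0 (pword N s) p = (s (ord_of p)).+1.
Proof.
move=> lt_p; rewrite (nth_map (Ordinal lam_gt0)) ?size_enum_ord //.
by congr (s _).+1; apply: val_inj; rewrite /= ord_ofK // nth_enum_ord.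
Qed.

Lemma in_shape00 : in_shape 0 0.
Proof. by apply: nth_lam_gt0; move: lam_gt0; case: lam. Qed.

Definition entry (s : 'S_N) i j := nth 0 (pword N s) (flatten_index lam i j).

Lemma entry_perm s i j :
  in_shape i j -> entry s i j = (s (ord_of (flatten_index lam i j))).+1.
Proof. by move=> h; rewrite /entry nth_pword // flatten_indexP. Qed.

Lemma entry_range s i j : in_shape i j -> 0 < entry s i j <= N.
Proof. by move=> h; rewrite entry_perm //= ltn_ord. Qed.

Lemma entry_inj s i j i' j' : in_shape i j -> in_shape i' j' ->
  entry s i j = entry s i' j' -> i = i' /\ j = j'.
Proof.
move=> h h'; rewrite !entry_perm // => -[] /val_inj /perm_inj /(congr1 (@nat_of_ord _)).
rewrite !ord_ofK ?flatten_indexP // => e.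
have := flatten_indexKl h; have := flatten_indexKr h.
by rewrite e flatten_indexKl // flatten_indexKr.
Qed.

Lemma entry_surj s v : 0 < v <= N -> exists i j, in_shape i j /\ entry s i j = v.
Proof.
move=> v_range; set p := (s^-1 (ord_of v.-1))%g.
have hp : in_shape (reshape_index lam p) (reshape_offset lam p) := reshape_offsetP (ltn_ord p).
exists (reshape_index lam p), (reshape_offset lam p); split=> //.
rewrite entry_perm // reshape_indexK.
have -> : ord_of p = p by apply/val_inj; rewrite /= ord_ofK.
by rewrite /p permKV ord_ofK; lia.
Qed.

Lemma perm_entry_ext s s' : (forall i j, in_shape i j -> entry s i j = entry s' i j) -> s = s'.
Proof.
move=> e; apply/permP => x.
have hx : in_shape (reshape_index lam x) (reshape_offset lam x) := reshape_offsetP (ltn_ord x).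
move: (e _ _ hx); rewrite !entry_perm // reshape_indexK.
have -> : ord_of x = x by apply: ord_inj; rewrite ord_ofK.
by case=> /val_inj.
Qed.

Lemma sign_word_pword s : sign_word N (pword N s) = ((-1) ^+ odd_perm s)%R.
Proof.
rewrite /sign_word; case: pickP => [s' /eqP e | /(_ s)]; last by rewrite eqxx.
by rewrite (@perm_entry_ext s' s) // => i j _; rewrite /entry e.
Qed.

Lemma flatten_rows_pword (f : nat -> nat -> nat) s :
    (forall i j, in_shape i j -> f i j = entry s i j) ->
  flatten [seq [seq f i j | j <- iota 0 (nth 0 lam i)] | i <- iota 0 (size lam)] = pword N s.
Proof.
move=> ef; set t := [seq _ | i <- _].
have shape_t : shape t = lam.
  rewrite /shape -map_comp -[RHS](mkseq_nth 0).
  by apply: eq_map => i; rewrite /= size_map size_iota.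
apply: (@eq_from_nth _ 0); first by rewrite size_flatten shape_t size_pword.
move=> p; rewrite size_flatten shape_t => lt_p.
have hp : in_shape (reshape_index lam p) (reshape_offset lam p) := reshape_offsetP lt_p.
have lt_i := in_shape_size hp.
rewrite nth_flatten shape_t (nth_map 0) ?size_iota // nth_iota //.
by rewrite (nth_map 0) ?size_iota // nth_iota // !add0n ef // /entry reshape_indexK.
Qed.

Definition standard_perm (s : 'S_N) :=
  (forall i j, in_shape i j.+1 -> entry s i j < entry s i j.+1) /\
  (forall i j, in_shape i.+1 j -> entry s i j < entry s i.+1 j).

Lemma nth_reshape_pword s i j : in_shape i j ->
  nth 0 (nth [::] (reshape lam (pword N s)) i) j = entry s i j.
Proof. by move=> h; rewrite nth_reshape nth_take // nth_drop. Qed.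

Lemma size_nth_reshape_pword s i : i < size lam ->
  size (nth [::] (reshape lam (pword N s)) i) = nth 0 lam i.
Proof.
move=> lt_i; have /reshapeKl : size (pword N s) >= sumn lam by rewrite size_pword.
by move/(congr1 (nth 0 ^~ i)); rewrite /shape (nth_map [::]) // size_reshape.
Qed.

Lemma standard_permP s : reflect (standard_perm s) (is_standard lam (reshape lam (pword N s))).
Proof.
apply: (iffP andP) => [[rows cols] | [rows cols]]; split.
- move=> i j hij; have lt_i := in_shape_size hij.
  have := allP rows i; rewrite mem_iota lt_i => /(_ isT) /(sortedP 0) /(_ j).
  rewrite size_nth_reshape_pword // !nth_reshape_pword //; first exact.
  exact: in_shape_down hij _ _.
- move=> i j hij; have lt_i : i < size lam by have := in_shape_size hij; lia.
  have := allP cols i; rewrite mem_iota lt_i => /(_ isT) /allP /(_ j).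
  rewrite mem_iota add0n => /(_ hij).
  by rewrite !nth_reshape_pword //; exact: in_shape_down hij _ _.
- apply/allP => i; rewrite mem_iota add0n /= => lt_i.
  apply/(sortedP 0) => j; rewrite size_nth_reshape_pword // => hj.
  by rewrite !nth_reshape_pword //; [apply: rows | exact: in_shape_down hj _ _].
- apply/allP => i _; apply/allP => j; rewrite mem_iota add0n /= => hj.
  by rewrite !nth_reshape_pword //; [apply: cols | exact: in_shape_down hj _ _].
Qed.

Section StandardPerm.
Variable s : 'S_N.
Hypothesis s_std : standard_perm s.

Lemma entry_mono_row i j d : in_shape i (j + d) -> entry s i j <= entry s i (j + d).
Proof.
elim: d => [|d IH] h; first by rewrite addn0.
have := IH (in_shape_down h (leqnn i) (leq_add (leqnn j) (leqnSn d))).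
by have := s_std.1 i (j + d); rewrite -addnS => /(_ h); lia.
Qed.

Lemma entry_mono_col i j d : in_shape (i + d) j -> entry s i j <= entry s (i + d) j.
Proof.
elim: d => [|d IH] h; first by rewrite addn0.
have := IH (in_shape_down h (leq_add (leqnn i) (leqnSn d)) (leqnn j)).
by have := s_std.2 (i + d) j; rewrite -addnS => /(_ h); lia.
Qed.

Lemma entry_mono i j i' j' : in_shape i' j' -> i <= i' -> j <= j' ->
  entry s i j <= entry s i' j'.
Proof.
move=> h le_ii' le_jj'; have h1 : in_shape i j' by exact: in_shape_down h _ _.
have := entry_mono_row (d := j' - j) (i := i) (j := j); rewrite subnKC // => /(_ h1).
have := entry_mono_col (d := i' - i) (i := i) (j := j'); rewrite subnKC // => /(_ h).
lia.
Qed.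

Lemma entry00 : entry s 0 0 = 1.
Proof.
have [i [j [h e]]] := entry_surj s (v := 1) ltac:(lia).
by have := entry_mono h (leq0n i) (leq0n j); have := entry_range s in_shape00; lia.
Qed.


Lemma entry_eq1 i j : in_shape i j -> (entry s i j == 1) = (i == 0) && (j == 0).
Proof.
move=> hij; apply/eqP/andP => [e | [/eqP -> /eqP ->]]; last exact: entry00.
by have [-> ->] := entry_inj hij in_shape00 (etrans e (esym entry00)).
Qed.

End StandardPerm.

Lemma adjacent_at_ltn s i j i' j' : standard_perm s -> in_shape i j -> in_shape i' j' ->
  adjacent_at i j i' j' -> (entry s i j < entry s i' j') = (i + j < i' + j').
Proof.
move=> [rows cols] hij hij'.
case/orP => /andP[/eqP ei /orP[] /eqP ej]; subst.
- by rewrite rows // addnS ltnSn.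
- by have := rows _ _ hij; lia.
- by rewrite cols // addSn ltnSn.
- by have := cols _ _ hij; lia.
Qed.

Definition cell_entry (s : 'S_N) (c : cell N) := entry s c.1 c.2.

Section DominoPairs.
Variables r n : nat.
Hypothesis sumn_lam : N = r + 2 * n.

(* In [T(D)] the domino with value [k + 1] carries the entries [r + 2k + 1] and [r + 2k + 2]. *)
Definition pair_adjacent (s : 'S_N) (k : nat) : bool :=
  [forall c : cell N, forall d : cell N,
    [&& c \in diag N lam, d \in diag N lam, cell_entry s c == r + 2 * k + 1
      & cell_entry s d == r + 2 * k + 2] ==> adjacent N c d].

Definition pairs_adjacent (s : 'S_N) : bool := [forall k : 'I_n, pair_adjacent s k].

Lemma pair_adjacentP s k i j i' j' : pair_adjacent s k -> in_shape i j -> in_shape i' j' ->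
  entry s i j = r + 2 * k + 1 -> entry s i' j' = r + 2 * k + 2 -> adjacent_at i j i' j'.
Proof.
move=> /forallP /(_ (inord i, inord j)) /forallP /(_ (inord i', inord j')) adj hij hij' e1 e2.
have [? ?] := in_shape_lt hij; have [? ?] := in_shape_lt hij'.
by move: adj; rewrite adjacentE /= !in_diag /cell_entry /= !inordK // ?hij ?hij' ?e1 ?e2 ?eqxx; try lia.
Qed.

Lemma pair_adjacentPn s k : ~~ pair_adjacent s k -> exists i j i' j',
  [/\ in_shape i j, in_shape i' j', entry s i j = r + 2 * k + 1,
      entry s i' j' = r + 2 * k + 2 & ~~ adjacent_at i j i' j'].
Proof.
rewrite negb_forall => /existsP[c]; rewrite negb_forall => /existsP[d].
rewrite negb_imply => /andP[/and4P[hc hd /eqP e1 /eqP e2] nadj].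
by exists c.1, c.2, d.1, d.2; rewrite -!in_diag.
Qed.

Lemma pair_adjacent_ext s s' k :
  (forall c : cell N, c \in diag N lam ->
     ((cell_entry s' c == r + 2 * k + 1) = (cell_entry s c == r + 2 * k + 1)) /\
     ((cell_entry s' c == r + 2 * k + 2) = (cell_entry s c == r + 2 * k + 2))) ->
  pair_adjacent s' k = pair_adjacent s k.
Proof.
move=> e; apply: eq_forallb => c; apply: eq_forallb => d.
case: (boolP (c \in diag N lam)) => hc; case: (boolP (d \in diag N lam)) => hd //=.
by have [-> _] := e c hc; have [_ ->] := e d hd.
Qed.

Lemma pair_adjacent_exchange s s' k :
  (forall c : cell N, c \in diag N lam ->
     ((cell_entry s' c == r + 2 * k + 1) = (cell_entry s c == r + 2 * k + 2)) /\
     ((cell_entry s' c == r + 2 * k + 2) = (cell_entry s c == r + 2 * k + 1))) ->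
  pair_adjacent s' k = pair_adjacent s k.
Proof.
move=> e; apply/idP/idP => /forallP adj; apply/forallP => c; apply/forallP => d;
  apply/implyP => /and4P[hc hd e1 e2]; have := forallP (adj d) c;
  rewrite hc hd adjacentE adjacent_atC -adjacentE /=.
- by have [-> _] := e d hd; have [_ ->] := e c hc; rewrite e1 e2.
- by have [_ <-] := e d hd; have [<- _] := e c hc; rewrite e1 e2.
Qed.

Definition pair_swap k : 'S_N := tperm (ord_of (r + 2 * k)) (ord_of (r + 2 * k + 1)).

Lemma entry_pair_swap s k i j : k < n -> in_shape i j ->
  entry (s * pair_swap k) i j = pair_swap_val r k (entry s i j).
Proof.
move=> lt_k h; rewrite !entry_perm // permM /pair_swap /pair_swap_val; set x := s _.
have ha : ord_of (r + 2 * k) = r + 2 * k :> nat by rewrite ord_ofK //; lia.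
have hb : ord_of (r + 2 * k + 1) = r + 2 * k + 1 :> nat by rewrite ord_ofK //; lia.
case: tpermP => [->|->|nxa nxb]; rewrite ?ha ?hb; try by case: eqP => ?; [lia | case: eqP; lia].
have /eqP ? : (x : nat) != r + 2 * k by apply: contra_not_neq nxa => e; apply: val_inj; rewrite /= e ha.
have /eqP ? : (x : nat) != r + 2 * k + 1 by apply: contra_not_neq nxb => e; apply: val_inj; rewrite /= e hb.
by case: eqP => ?; [lia | case: eqP => ?; lia].
Qed.

Lemma standard_perm_swap s k : k < n -> standard_perm s -> ~~ pair_adjacent s k ->
  standard_perm (s * pair_swap k).
Proof.
move=> lt_k [rows cols] /pair_adjacentPn[i0 [j0 [i1 [j1 [h0 h1 e0 e1 nadj]]]]].
have swap_ltn i j i' j' : in_shape i j -> in_shape i' j' -> adjacent_at i j i' j' ->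
    entry s i j < entry s i' j' -> entry (s * pair_swap k) i j < entry (s * pair_swap k) i' j'.
  move=> h h' adj lt_e; rewrite !entry_pair_swap //; apply: pair_swap_val_ltn => // -[f0 f1].
  have [ei ej] := entry_inj h0 h (etrans e0 (esym f0)).
  have [ei' ej'] := entry_inj h1 h' (etrans e1 (esym f1)).
  by move: nadj; rewrite ei ej ei' ej' adj.
split=> i j hij.
- apply: (swap_ltn _ _ _ _ _ hij _ (rows _ _ hij)); first exact: in_shape_down hij _ _.
  by rewrite /adjacent_at !eqxx.
- apply: (swap_ltn _ _ _ _ _ hij _ (cols _ _ hij)); first exact: in_shape_down hij _ _.
  by rewrite /adjacent_at !eqxx orbT.
Qed.

Lemma pair_adjacent_swap s k k' : k < n ->
  pair_adjacent (s * pair_swap k) k' = pair_adjacent s k'.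
Proof.
move=> lt_k; case: (eqVneq k' k) => [->|ne_k].
- apply: pair_adjacent_exchange => c; rewrite in_diag => hc.
  rewrite /cell_entry entry_pair_swap // /pair_swap_val.
  by split; repeat case: ifP => /eqP ?; apply/eqP/eqP; lia.
- apply: pair_adjacent_ext => c; rewrite in_diag => hc.
  rewrite /cell_entry entry_pair_swap // /pair_swap_val.
  by split; repeat case: ifP => /eqP ?; apply/eqP/eqP; lia.
Qed.

Lemma pairs_adjacent_swap s k : k < n -> pairs_adjacent (s * pair_swap k) = pairs_adjacent s.
Proof. by move=> lt_k; apply: eq_forallb => k'; rewrite pair_adjacent_swap. Qed.

Definition first_nonadjacent s := find (fun k => ~~ pair_adjacent s k) (iota 0 n).

Lemma first_nonadjacent_swap s k : k < n ->
  first_nonadjacent (s * pair_swap k) = first_nonadjacent s.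
Proof. by move=> lt_k; apply: eq_find => k'; rewrite /= pair_adjacent_swap. Qed.

Lemma first_nonadjacentP s : ~~ pairs_adjacent s ->
  first_nonadjacent s < n /\ ~~ pair_adjacent s (first_nonadjacent s).
Proof.
rewrite negb_forall => /existsP[k nadj].
have has_nadj : has (fun k => ~~ pair_adjacent s k) (iota 0 n).
  by apply/hasP; exists (val k) => //; rewrite mem_iota /=.
have := has_nadj; rewrite has_find size_iota => lt_k; split=> //.
by have := nth_find 0 has_nadj; rewrite nth_iota.
Qed.

Definition bad_syt s := is_standard lam (reshape lam (pword N s)) && ~~ pairs_adjacent s.

Definition swap_first_pair s : 'S_N :=
  if bad_syt s then (s * pair_swap (first_nonadjacent s))%g else s.

Lemma bad_syt_swap s : bad_syt s -> bad_syt (s * pair_swap (first_nonadjacent s))%g.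
Proof.
case/andP => /standard_permP s_std nadj; have [lt_k nadj_k] := first_nonadjacentP nadj.
rewrite /bad_syt pairs_adjacent_swap // nadj andbT.
exact/standard_permP/standard_perm_swap.
Qed.

Lemma bad_syt_swap_first_pair s : bad_syt (swap_first_pair s) = bad_syt s.
Proof. by rewrite /swap_first_pair; case: ifPn => [/bad_syt_swap|/negbTE]. Qed.

Lemma swap_first_pairK : involutive swap_first_pair.
Proof.
move=> s; rewrite {2}/swap_first_pair; case: ifPn => [bad|/negbTE good]; last first.
  by rewrite /swap_first_pair good.
have [lt_k _] := first_nonadjacentP (proj2 (andP bad)).
rewrite /swap_first_pair bad_syt_swap // first_nonadjacent_swap // -mulgA.
by rewrite /pair_swap tperm2 mulg1.
Qed.

Lemma odd_swap_first_pair s : bad_syt s -> odd_perm (swap_first_pair s) = ~~ odd_perm s.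
Proof.
move=> bad; rewrite /swap_first_pair bad odd_permM odd_tperm.
have [lt_k _] := first_nonadjacentP (proj2 (andP bad)).
suff -> : ord_of (r + 2 * first_nonadjacent s) != ord_of (r + 2 * first_nonadjacent s + 1).
  by rewrite addbT.
by apply/eqP => /(congr1 (@nat_of_ord _)); rewrite !ord_ofK; lia.
Qed.

Lemma sum_sign_bad_syt : (\sum_(s | bad_syt s) (-1) ^+ odd_perm s = 0 :> int)%R.
Proof.
set S := (\sum_(s | _) _)%R.
suff : S = (- S)%R by move/eqP; rewrite -addr_eq0 -mulr2n mulrn_eq0 => /eqP.
rewrite {1}/S (reindex_inj (inv_inj swap_first_pairK)) /= -sumrN.
apply: eq_big => [s | s bad]; first by rewrite bad_syt_swap_first_pair.
rewrite odd_swap_first_pair; last by rewrite -bad_syt_swap_first_pair.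
by case: (odd_perm s); rewrite /= ?expr0 ?expr1 ?opprK.
Qed.

Definition dom_of_perm (s : 'S_N) : {ffun 'I_n.+1 -> {set cell N}} :=
  [ffun k : 'I_n.+1 => [set c | (c \in diag N lam) && (cell_entry s c <= r + 2 * k)]].

Lemma dom_of_perm_diff s k : k < n ->
  dom_of_perm s (inord k.+1) :\: dom_of_perm s (inord k) =
  [set c | (c \in diag N lam) && (r + 2 * k < cell_entry s c <= r + 2 * k + 2)].
Proof. by move=> lt_k; apply/setP => c; rewrite !inE !ffunE !inE !inordK; lia. Qed.

Lemma dom_of_perm_domino s k : pairs_adjacent s -> k < n ->
  is_domino N (dom_of_perm s (inord k.+1) :\: dom_of_perm s (inord k)).
Proof.
move=> adj lt_k; rewrite dom_of_perm_diff //.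
have [i1 [j1 [h1 e1]]] := entry_surj s (v := r + 2 * k + 1) ltac:(lia).
have [i2 [j2 [h2 e2]]] := entry_surj s (v := r + 2 * k + 2) ltac:(lia).
have adj12 := pair_adjacentP (forallP adj (Ordinal lt_k)) h1 h2 e1 e2.
have [/ltnW le_i1 /ltnW le_j1] := in_shape_lt h1.
have [/ltnW le_i2 /ltnW le_j2] := in_shape_lt h2.
apply/existsP; exists (inord i1, inord j1); apply/existsP; exists (inord i2, inord j2).
rewrite adjacentE /= !inordK // adj12; apply/eqP/setP => c.
rewrite !inE !cell_eq_inord // -/(in_shape _ _) /cell_entry; apply/idP/idP.
- case/andP => hc; move e_c: (entry s c.1 c.2) => v range_v.
  have [ev|ev] : v = entry s i1 j1 \/ v = entry s i2 j2.
    by rewrite e1 e2; case: (ltnP v (r + 2 * k + 2)) => ?; [left|right]; lia.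
  + by have [-> ->] := entry_inj hc h1 (etrans e_c ev); rewrite !eqxx.
  + by have [-> ->] := entry_inj hc h2 (etrans e_c ev); rewrite !eqxx orbT.
- by case/orP => /andP[/eqP -> /eqP ->]; rewrite ?h1 ?h2 ?e1 ?e2 /=; lia.
Qed.

Lemma dom_of_perm_young s k : standard_perm s -> young N (dom_of_perm s k).
Proof.
move=> s_std; apply/forallP => c; apply/implyP; rewrite ffunE inE in_diag.
case/andP => hc le_c; apply/forallP => d; apply/implyP => /andP[le1 le2].
rewrite inE in_diag (in_shape_down hc le1 le2) /=.
by apply: leq_trans le_c; apply: entry_mono.
Qed.

Hypothesis r_le1 : r <= 1.

Lemma dom_of_perm_core s : standard_perm s -> dom_of_perm s ord0 = diag N (delta r).
Proof.
move=> s_std; apply/setP => c; rewrite ffunE !inE /= muln0 addn0 -/(in_shape _ _).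
have diag_core : (c.2 < nth 0 (delta r) c.1) = (r == 1) && ((c.1 == 0 :> nat) && (c.2 == 0 :> nat)).
  by rewrite /delta; case: (r) r_le1 => [|[]] // _; case: (c.1 : nat) => [|[]]; case: (c.2 : nat).
rewrite diag_core; case: (boolP (in_shape c.1 c.2)) => hc /=.
- rewrite /cell_entry -(entry_eq1 s_std hc); have := entry_range s hc.
  move: (entry s c.1 c.2) => v /andP[v_gt0 _].
  by apply/idP/andP => [le_v | [/eqP -> /eqP ->]] //; split; apply/eqP; lia.
- apply/esym/negP => /andP[_ /andP[/eqP c1 /eqP c2]].
  by move: hc; rewrite c1 c2 in_shape00.
Qed.

Lemma dom_of_perm_full s : dom_of_perm s ord_max = diag N lam.
Proof.
apply/setP => c; rewrite ffunE !inE /=; apply: andb_idr => hc.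
by have := entry_range s hc; rewrite /cell_entry; lia.
Qed.

Lemma dom_of_perm_tab s : standard_perm s -> pairs_adjacent s -> is_domino_tab r n lam (dom_of_perm s).
Proof.
move=> s_std adj; rewrite /is_domino_tab dom_of_perm_core // dom_of_perm_full !eqxx !andbT.
apply/andP; split; first by apply/forallP => k; apply: dom_of_perm_young.
apply/forallP => k; rewrite dom_of_perm_domino // andbT.
have lt_k := ltn_ord k.
by apply/subsetP => c; rewrite !ffunE !inE !inordK; lia.
Qed.

Section DominoTableau.
Variable D : {ffun 'I_n.+1 -> {set cell N}}.
Hypothesis D_tab : is_domino_tab r n lam D.

Local Notation tab k := (D (inord k)).
Local Notation domino k := (tab k.+1 :\: tab k).
Local Notation entry_of := (dom_entry r n lam D).

Definition core_cell (c : cell N) := (r == 1) && (c == (ord0, ord0)).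

Lemma tab_young k : young N (tab k).
Proof. by case/andP: D_tab => /andP[/andP[/forallP]]. Qed.

Lemma tab0 : tab 0 = diag N (delta r).
Proof. by case/andP: D_tab => /andP[/andP[_ /eqP <-] _] _; congr (D _); apply: val_inj; rewrite /= inordK. Qed.

Lemma tab_last : tab n = diag N lam.
Proof. by case/andP: D_tab => /andP[_ /eqP <-] _; congr (D _); apply: val_inj; rewrite /= inordK. Qed.

Lemma tab_step k : k < n -> tab k \subset tab k.+1 /\ is_domino N (domino k).
Proof. by move=> lt_k; case/andP: D_tab => _ /forallP /(_ (Ordinal lt_k)) /andP. Qed.

Lemma tab_mono j k : j <= k -> k <= n -> tab j \subset tab k.
Proof.
elim: k => [|k IH] le_jk le_kn; first by rewrite leqn0 in le_jk; rewrite (eqP le_jk).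
case: (eqVneq j k.+1) => [-> //|ne_j].
by apply: subset_trans (IH _ _) (proj1 (tab_step _)); lia.
Qed.

Lemma tab_sub_diag k c : k <= n -> c \in tab k -> c \in diag N lam.
Proof. by move=> le_k; rewrite -tab_last; apply/subsetP/tab_mono. Qed.

Lemma mem_tab0 c : (c \in tab 0) = core_cell c.
Proof.
rewrite tab0 /core_cell inE /delta; case: (r) r_le1 => [|[|]] //= _; first by rewrite nth_nil.
by case: c => a b; rewrite xpair_eqE -!val_eqE /=; case: (a : nat) => [|[]] //=; case: (b : nat).
Qed.

Lemma core_cell_tab c k : core_cell c -> k <= n -> c \in tab k.
Proof. by move=> cc le_k; apply: (subsetP (tab_mono (leq0n k) le_k)); rewrite mem_tab0. Qed.

Lemma core_cellE c : core_cell c -> r = 1 /\ c = (ord0, ord0).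
Proof. by case/andP => /eqP ? /eqP. Qed.

Lemma mem_domino_exists c : c \in diag N lam -> ~~ core_cell c ->
  exists2 k, k < n & c \in domino k.
Proof.
move=> hc nc; have ex : exists m, c \in tab m by exists n; rewrite tab_last.
case: (ex_minnP ex) => m c_m m_min.
have le_m : m <= n by apply: m_min; rewrite tab_last.
have m_gt0 : 0 < m by rewrite lt0n; apply: contraNneq nc => m0; rewrite -mem_tab0 -m0.
exists m.-1; first lia.
rewrite inE prednK // c_m andbT; apply/negP => /m_min; lia.
Qed.

Lemma mem_domino_uniq c k k' : k < n -> k' < n -> c \in domino k -> c \in domino k' -> k = k'.
Proof.
move=> lt_k lt_k'; rewrite !inE => /andP[n1 i1] /andP[n2 i2].
case: (ltngtP k k') => // lt.
- by move: n2; rewrite (subsetP (tab_mono lt _) _ i1) //; lia.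
- by move: n1; rewrite (subsetP (tab_mono lt _) _ i2) //; lia.
Qed.

Lemma domino_partner c k : k < n -> c \in domino k -> exists d,
  [/\ d \in domino k, d != c, adjacent N c d & forall e, e \in domino k -> e = c \/ e = d].
Proof.
move=> lt_k; have [_ /existsP[x /existsP[y /andP[adj /eqP ->]]]] := tab_step lt_k.
have ne_xy : x != y by apply: contraTneq adj => ->; rewrite adjacentE adjacent_at_irr.
rewrite !inE => /orP[] /eqP ->.
- exists y; rewrite !inE eqxx orbT eq_sym ne_xy; split=> // e.
  by rewrite !inE => /orP[] /eqP ->; [left|right].
- exists x; rewrite !inE eqxx ne_xy adjacentE adjacent_atC -adjacentE; split=> // e.
  by rewrite !inE => /orP[] /eqP ->; [right|left].
Qed.

Lemma dom_entry_core c : core_cell c -> entry_of c = 1.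
Proof. by rewrite /dom_entry /core_cell => ->. Qed.

Lemma dom_entry_domino c d k : k < n -> c \in domino k -> d \in domino k -> d != c ->
  entry_of c = r + 2 * k + 1 + (d.1 + d.2 < c.1 + c.2).
Proof.
move=> lt_k hc hd ne_dc; rewrite /dom_entry.
have -> : (r == 1) && (c == (ord0, ord0)) = false.
  apply/negbTE/negP => /(core_cell_tab (k := k)) /(_ (ltnW lt_k)).
  by move: hc; rewrite inE => /andP[/negbTE ->].
case: pickP => [k' hk' | /(_ (Ordinal lt_k))]; last by rewrite hc.
rewrite (mem_domino_uniq (ltn_ord k') lt_k hk' hc).
case: pickP => [d' /andP[hd' ne_d'c] | /(_ d)]; last by rewrite hd ne_dc.
have [d0 [_ _ _ only_cd0]] := domino_partner lt_k hc.
have -> : d' = d.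
  case: (only_cd0 _ hd') => [e'|->]; first by rewrite e' eqxx in ne_d'c.
  by case: (only_cd0 _ hd) => [e|->] //; rewrite e eqxx in ne_dc.
by case: (_ < _); rewrite /=; lia.
Qed.

Lemma dom_entryP c : c \in diag N lam -> ~~ core_cell c -> exists k d,
  [/\ k < n, c \in domino k, (d \in domino k) && (d != c),
      (forall e, e \in domino k -> e = c \/ e = d) &
      entry_of c = r + 2 * k + 1 + (d.1 + d.2 < c.1 + c.2)].
Proof.
move=> hc nc; have [k lt_k c_k] := mem_domino_exists hc nc.
have [d [d_k ne_dc _ only_cd]] := domino_partner lt_k c_k.
by exists k, d; rewrite d_k ne_dc; split=> //; apply: dom_entry_domino.
Qed.

Lemma mem_domino_adjacent c d k : k < n -> c \in domino k -> d \in domino k -> d != c ->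
  adjacent N c d.
Proof.
move=> lt_k c_k d_k ne_dc; have [d0 [_ _ adj only_cd0]] := domino_partner lt_k c_k.
by case: (only_cd0 _ d_k) => [e|->] //; rewrite e eqxx in ne_dc.
Qed.

Lemma mem_tab_dom_entry c k : c \in diag N lam -> k <= n -> (c \in tab k) = (entry_of c <= r + 2 * k).
Proof.
move=> hc le_k; case: (boolP (core_cell c)) => cc.
  by rewrite core_cell_tab // dom_entry_core //; have [-> _] := core_cellE cc; lia.
have [k0 [d [lt_k0 c_k0 _ _ ->]]] := dom_entryP hc cc.
have := leq_b1 (d.1 + d.2 < c.1 + c.2); move: (nat_of_bool _) => b le_b.
case: (ltnP k0 k) => [lt|le].
- rewrite (subsetP (tab_mono lt le_k)); first by apply/esym/idP; lia.
  by move: c_k0; rewrite inE => /andP[].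
- have -> : c \in tab k = false.
    by apply/negP => c_k; move: c_k0; rewrite inE (subsetP (tab_mono le (ltnW lt_k0)) _ c_k).
  by apply/esym/negbTE; rewrite -ltnNge; lia.
Qed.

Lemma dom_entry_range c : c \in diag N lam -> 0 < entry_of c <= N.
Proof.
move=> hc; case: (boolP (core_cell c)) => cc; first by rewrite dom_entry_core //; lia.
have [k [d [lt_k _ _ _ ->]]] := dom_entryP hc cc.
by have := leq_b1 (d.1 + d.2 < c.1 + c.2); lia.
Qed.

Lemma dom_entry_gt c : c \in diag N lam -> ~~ core_cell c -> r < entry_of c.
Proof. by move=> hc cc; have [k [d [_ _ _ _ ->]]] := dom_entryP hc cc; lia. Qed.

Lemma dom_entry_inj c c' : c \in diag N lam -> c' \in diag N lam ->
  entry_of c = entry_of c' -> c = c'.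
Proof.
move=> hc hc' e.
case: (boolP (core_cell c)) => cc; case: (boolP (core_cell c')) => cc'.
- by rewrite (core_cellE cc).2 (core_cellE cc').2.
- by have := dom_entry_gt hc' cc'; rewrite -e dom_entry_core // (core_cellE cc).1.
- by have := dom_entry_gt hc cc; rewrite e dom_entry_core // (core_cellE cc').1.
have [k [d [lt_k c_k /andP[d_k ne_dc] only_cd ec]]] := dom_entryP hc cc.
have [k' [d' [lt_k' c'_k' _ only_c'd' ec']]] := dom_entryP hc' cc'.
have [ekk' same_side] : k = k' /\ (d.1 + d.2 < c.1 + c.2) = (d'.1 + d'.2 < c'.1 + c'.2).
  by move: e; rewrite ec ec'; do 2 case: (_ < _); split=> //=; lia.
subst k'.
case: (eqVneq c c') => // ne_cc'.
case: (only_cd _ c'_k') => [e_c'|e_c']; first by rewrite e_c' eqxx in ne_cc'.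
case: (only_c'd' _ c_k) => [e_c|e_c]; first by rewrite e_c eqxx in ne_cc'.
have := adjacent_diagonal_neq (mem_domino_adjacent lt_k c_k d_k ne_dc).
by move: same_side; rewrite -e_c' -e_c; case: ltngtP.
Qed.

Lemma dom_entry_ltn c c' : c \in diag N lam -> c' \in diag N lam -> c != c' ->
  c.1 <= c'.1 -> c.2 <= c'.2 -> ~~ core_cell c' -> entry_of c < entry_of c'.
Proof.
move=> hc hc' ne_cc' le1 le2 cc'.
case: (boolP (core_cell c)) => cc.
  by rewrite dom_entry_core //; move: (dom_entry_gt hc' cc'); rewrite (core_cellE cc).1.
have [k [d [lt_k c_k _ only_cd ->]]] := dom_entryP hc cc.
have [k' [d' [lt_k' c'_k' _ only_c'd' ->]]] := dom_entryP hc' cc'.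
have c_k'S : c \in tab k'.+1.
  have /forallP/(_ c')/implyP := tab_young k'.+1.
  move: c'_k'; rewrite inE => /andP[_ ->] /(_ isT) /forallP /(_ c) /implyP; apply.
  by rewrite le1 le2.
have le_kk' : k <= k'.
  rewrite leqNgt; apply/negP => lt_k'k.
  by move: c_k; rewrite inE (subsetP (tab_mono lt_k'k (ltnW lt_k)) _ c_k'S).
have b1 := leq_b1 (d.1 + d.2 < c.1 + c.2); have b2 := leq_b1 (d'.1 + d'.2 < c'.1 + c'.2).
case: (ltnP k k') => [lt_kk'|le_k'k].
  by move: b1 b2 lt_kk'; move: (nat_of_bool _) (nat_of_bool _) => x y; lia.
have ek : k' = k by apply/eqP; rewrite eqn_leq le_k'k le_kk'.
subst k'.
case: (only_cd _ c'_k') => [e|e]; first by rewrite e eqxx in ne_cc'.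
case: (only_c'd' _ c_k) => [e'|e']; first by rewrite e' eqxx in ne_cc'.
have lt_diag : c.1 + c.2 < c'.1 + c'.2.
  move: ne_cc' le1 le2; rewrite -pair_eqE /pair_eq negb_and -!val_eqE /=; clear; lia.
rewrite -e -e' lt_diag.
have -> : (c'.1 + c'.2 < c.1 + c.2) = false by apply/negbTE; rewrite -leqNgt ltnW.
by rewrite /nat_of_bool; clear; lia.
Qed.

Definition tab_entry i j := entry_of (inord i, inord j).

Lemma tab_entry_ltn i j i' j' : in_shape i' j' -> i <= i' -> j <= j' -> i + j < i' + j' ->
  tab_entry i j < tab_entry i' j'.
Proof.
move=> h' le_ii' le_jj' lt_sum; have h := in_shape_down h' le_ii' le_jj'.
have [? ?] := in_shape_lt h; have [? ?] := in_shape_lt h'.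
apply: dom_entry_ltn; rewrite ?in_diag_inord //= ?inordK //; try lia.
- by rewrite -pair_eqE /pair_eq /= -!val_eqE /= !inordK //; lia.
- by apply/nandP; right; rewrite -pair_eqE /pair_eq -!val_eqE /= !inordK //; lia.
Qed.

Definition cell_of_index (p : nat) : cell N :=
  (inord (reshape_index lam p), inord (reshape_offset lam p)).

Lemma cell_of_index_diag p : p < N -> cell_of_index p \in diag N lam.
Proof.
move=> lt_p; have h := reshape_offsetP lt_p; have [? ?] := in_shape_lt h.
by rewrite in_diag_inord //; lia.
Qed.

Definition reading_perm_fun (p : 'I_N) : 'I_N := ord_of (entry_of (cell_of_index p)).-1.

Lemma reading_perm_fun_inj : injective reading_perm_fun.
Proof.
move=> p q /(congr1 (@nat_of_ord _)).
have hp := cell_of_index_diag (ltn_ord p); have hq := cell_of_index_diag (ltn_ord q).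
have := dom_entry_range hp; have := dom_entry_range hq => range_q range_p.
rewrite /reading_perm_fun !ord_ofK; try lia.
move=> e; have /(congr1 (fun c : cell N => (val c.1, val c.2))) := dom_entry_inj hp hq ltac:(lia).
have [? ?] := in_shape_lt (reshape_offsetP (ltn_ord p)).
have [? ?] := in_shape_lt (reshape_offsetP (ltn_ord q)).
rewrite /= !inordK; try lia.
by case=> e1 e2; apply: ord_inj; rewrite -(reshape_indexK lam p) -(reshape_indexK lam q) e1 e2.
Qed.

Definition reading_perm : 'S_N := perm reading_perm_fun_inj.

Lemma entry_reading_perm i j : in_shape i j -> entry reading_perm i j = tab_entry i j.
Proof.
move=> h; have [? ?] := in_shape_lt h.
rewrite entry_perm // permE /reading_perm_fun /cell_of_index (ord_ofK (flatten_indexP h)).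
rewrite flatten_indexKl // flatten_indexKr // -/(tab_entry i j).
have : 0 < tab_entry i j <= N by apply: dom_entry_range; rewrite in_diag_inord //; lia.
by move: (tab_entry i j) => v range_v; rewrite ord_ofK; lia.
Qed.

Lemma reading_perm_standard : standard_perm reading_perm.
Proof.
split=> i j h; rewrite !entry_reading_perm //; try exact: in_shape_down h _ _.
- by apply: tab_entry_ltn; rewrite // addnS.
- by apply: tab_entry_ltn; rewrite // addSn.
Qed.

Lemma cell_entry_reading_perm c : c \in diag N lam -> cell_entry reading_perm c = entry_of c.
Proof.
by rewrite in_diag => h; rewrite /cell_entry entry_reading_perm // /tab_entry !inord_val -surjective_pairing.
Qed.

Lemma dom_of_reading_perm : dom_of_perm reading_perm = D.
Proof.
apply/ffunP => k; apply/setP => c; rewrite ffunE inE.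
have le_k : k <= n by rewrite -ltnS.
case: (boolP (c \in diag N lam)) => hc /=.
- by rewrite cell_entry_reading_perm // -mem_tab_dom_entry // inord_val.
- by apply/esym/negP => c_k; apply: (negP hc); apply: (tab_sub_diag le_k); rewrite inord_val.
Qed.

Lemma pairs_adjacent_reading_perm : pairs_adjacent reading_perm.
Proof.
apply/forallP => k; apply/forallP => c; apply/forallP => d; apply/implyP.
case/and4P => hc hd; rewrite !cell_entry_reading_perm // => /eqP e1 /eqP e2.
have lt_k := ltn_ord k.
have mem_k x : x \in diag N lam -> r + 2 * k < entry_of x <= r + 2 * k + 2 -> x \in domino k.
  by move=> hx range_x; rewrite inE !mem_tab_dom_entry //; lia.
apply: (mem_domino_adjacent lt_k); rewrite ?mem_k ?e1 ?e2 //; try lia.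
by apply/eqP => e_dc; move: e2; rewrite e_dc e1; lia.
Qed.

End DominoTableau.

Lemma dom_entry_dom_of_perm s c : standard_perm s -> pairs_adjacent s -> c \in diag N lam ->
  dom_entry r n lam (dom_of_perm s) c = cell_entry s c.
Proof.
move=> s_std adj hc; have D_tab := dom_of_perm_tab s_std adj.
case: (boolP (core_cell c)) => cc.
  by rewrite dom_entry_core //; have [_ ->] := core_cellE cc; rewrite /cell_entry entry00.
have [k [d [lt_k c_k /andP[d_k ne_dc] _ ->]]] := dom_entryP D_tab hc cc.
have adj_cd := mem_domino_adjacent D_tab lt_k c_k d_k ne_dc.
have := adjacent_diagonal_neq adj_cd.
move: c_k d_k; rewrite dom_of_perm_diff // !inE /cell_entry => /andP[hc' range_c] /andP[hd' range_d].
have ltn_cd := adjacent_at_ltn s_std hc' hd' adj_cd.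
have ne_e : entry s c.1 c.2 != entry s d.1 d.2.
  apply: contra ne_dc => /eqP /(entry_inj hc' hd') [e1 e2].
  by rewrite -pair_eqE /pair_eq -!val_eqE /= e1 e2 !eqxx.
move: range_c range_d ne_e ltn_cd; move: (entry s c.1 c.2) (entry s d.1 d.2) => x y.
by case: (ltngtP (d.1 + d.2) (c.1 + c.2)) => //= _ range_c range_d ne_e ltn_cd _; lia.
Qed.

Lemma sign_dom_of_perm s : standard_perm s -> pairs_adjacent s ->
  sign_dom r n lam (dom_of_perm s) = ((-1) ^+ odd_perm s)%R.
Proof.
move=> s_std adj; rewrite /sign_dom (flatten_rows_pword (s := s)) ?sign_word_pword //.
move=> i j h; have [/ltnW ? /ltnW ?] := in_shape_lt h.
by rewrite dom_entry_dom_of_perm ?in_diag_inord // /cell_entry /= !inordK.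
Qed.

Lemma dom_of_perm_inj s s' :
    standard_perm s -> pairs_adjacent s -> standard_perm s' -> pairs_adjacent s' ->
  dom_of_perm s = dom_of_perm s' -> s = s'.
Proof.
move=> s_std adj s'_std adj' e; apply: perm_entry_ext => i j h.
have [/ltnW ? /ltnW ?] := in_shape_lt h.
have := dom_entry_dom_of_perm (c := (inord i, inord j)) s_std adj.
rewrite e dom_entry_dom_of_perm ?in_diag_inord // /cell_entry /= !inordK //.
by move=> ->.
Qed.

Definition domino_syt s := is_standard lam (reshape lam (pword N s)) && pairs_adjacent s.

Definition perm_of_dom (D : {ffun 'I_n.+1 -> {set cell N}}) : 'S_N :=
  odflt 1%g [pick s | domino_syt s && (dom_of_perm s == D)].

Lemma perm_of_domP D : is_domino_tab r n lam D ->
  domino_syt (perm_of_dom D) /\ dom_of_perm (perm_of_dom D) = D.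
Proof.
move=> D_tab; rewrite /perm_of_dom; case: pickP => [s /andP[good /eqP] | /(_ (reading_perm D_tab))] //.
rewrite /domino_syt pairs_adjacent_reading_perm dom_of_reading_perm eqxx !andbT.
by move/negP; case; apply/standard_permP/reading_perm_standard.
Qed.

Lemma perm_of_domK s : domino_syt s -> perm_of_dom (dom_of_perm s) = s.
Proof.
case/andP => /standard_permP s_std adj.
have [/andP[/standard_permP s'_std adj'] e] := perm_of_domP (dom_of_perm_tab s_std adj).
exact: dom_of_perm_inj.
Qed.

Lemma domino_sytE s : domino_syt s =
  is_domino_tab r n lam (dom_of_perm s) && (perm_of_dom (dom_of_perm s) == s).
Proof.
apply/idP/andP => [good | [D_tab /eqP <-]]; last exact: (perm_of_domP D_tab).1.
split; last by rewrite perm_of_domK.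
by case/andP: good => /standard_permP s_std adj; apply: dom_of_perm_tab.
Qed.

Lemma I_lam_sum_sign_dom :
  I_lam lam = (\sum_(D | is_domino_tab r n lam D) sign_dom r n lam D)%R.
Proof.
rewrite /I_lam (bigID pairs_adjacent) /= -/(bad_syt _) sum_sign_bad_syt addr0.
rewrite (reindex_onto dom_of_perm perm_of_dom) => [|D /perm_of_domP[_ //]].
apply: eq_big => [s | s]; first exact: domino_sytE.
by case/andP => /standard_permP s_std adj; rewrite sign_dom_of_perm.
Qed.

End DominoPairs.
End ReadingWord.
End Partition.

Theorem proposition4p1 (r n : nat) (lam : seq nat) :
  (r <= 1)%N -> (1 <= n)%N -> in_Pr r n lam ->
  I_lam lam =
  (\sum_(D : {ffun 'I_n.+1 -> {set cell (sumn lam)}} | is_domino_tab r n lam D)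
     sign_dom r n lam D)%R.
Proof.
move=> r_le1 n_gt0 [lam_partition [_ sumn_lam]].
have {}sumn_lam : sumn lam = r + 2 * n by rewrite sumn_lam; case: (r) r_le1 => [|[]].
have lam_gt0 : 0 < sumn lam by rewrite sumn_lam; lia.
exact: I_lam_sum_sign_dom.
Qed.
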